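(* Fix $0<b_1<b_2<1$ and an integer $N\ge1$. Let $\{\chi_t(x)\}$ and $\{j_t(x)\}$, $(x,t)\in\mathbb Z\times\{1,\dots,N\}$, be mutually independent, with $P[\chi_t(x)=1]=b_1=1-P[\chi_t(x)=0]$ and $P[j_t(x)=r]=(1-b_2)b_2^{r-1}$ for $r\ge1$. Call an integer $k$ separating if, for each $t\in[1,N]$, $\chi_t(k+t)=0$ and $\max_{m<k+t}(j_t(m)+m)\le k+t$. Then almost surely there exists a doubly infinite sequence of integers $\cdots<R_{-1}<R_0<R_1<\cdots$ such that every $R_i$ is separating. *)

From HB Require Import structures.
From mathcomp Require Import all_boot all_order all_algebra.
From mathcomp Require Import all_classical all_reals all_analysis.
Set Implicit Arguments. Unset Strict Implicit. Unset Printing Implicit Defensive.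
Import Order.TTheory GRing.Theory Num.Theory.
Local Open Scope classical_set_scope.
Local Open Scope ring_scope.

Definition mutually_independent d (T : measurableType d) (R : realType)
  (P : probability T R) (I : choiceType) (J : set I) (X : I -> T -> nat) :=
  (forall i, J i -> forall A : set nat, measurable (X i @^-1` A)) /\
  (forall (s : seq I) (A : I -> set nat), uniq s -> (forall i, i \in s -> J i) ->
     P (\bigcap_(i in [set` s]) (X i @^-1` A i)) =
     (\prod_(i <- s) P (X i @^-1` A i))%E).

(* The index of the joint family: inl (x,t) for chi_t(x), inr (x,t) for j_t(x). *)
Definition idx_time (i : (int * nat) + (int * nat)) : nat :=
  match i with inl (_, t) => t | inr (_, t) => t end.

Definition joint_family (T : Type) (chi j : nat -> int -> T -> nat)
  (i : (int * nat) + (int * nat)) : T -> nat :=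
  match i with inl (x, t) => chi t x | inr (x, t) => j t x end.

Definition separating (T : Type) (N : nat) (chi j : nat -> int -> T -> nat)
  (w : T) (k : int) : Prop :=
  forall t : nat, (1 <= t <= N)%N ->
    chi t (k + t%:Z) w = 0%N /\
    (forall m : int, m < k + t%:Z -> (j t m w)%:Z + m <= k + t%:Z).

From HB Require Import structures.
From mathcomp Require Import all_boot all_order all_algebra.
From mathcomp Require Import all_classical all_reals all_analysis.
From mathcomp Require Import zify ring lra.
Import Order.TTheory GRing.Theory Num.Theory.
Local Open Scope classical_set_scope.
Local Open Scope ring_scope.

(* For a window size W, the event that chi_t(k+t) = 0 and j_t(k+t-l) <= l for
   all 1 <= t <= N and 1 <= l <= W only involves finitely many independent
   coordinates, and its probability is at least
   a = ((1 - b1) * prod_{l >= 1} (1 - b2^l))^N > 0, uniformly in W.  On this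
   event k is separating unless some j_t(m) with m < k+t-W jumps beyond k+t,
   which has probability at most N b2^(W+1)/(1-b2).  Windows at mutual distance
   larger than W involve disjoint coordinates, so none of K of them occurs with
   probability at most (1-a)^K.  Choosing K and then W large, almost surely every
   half-line of integers contains a separating point, and separating points can
   then be enumerated increasingly by the integers. *)

Lemma exists_expr_le {R : realType} (q e : R) : 0 <= q -> q < 1 -> 0 < e ->
  exists n : nat, q ^+ n <= e.
Proof.
move=> q0 q1 e0; have : `|q| < 1 by rewrite ger0_norm.
move/cvg_expr/cvgrPdist_lt/(_ e e0) => [M _ /(_ M (leqnn M))].
by rewrite /= sub0r normrN ger0_norm ?exprn_ge0 // => /ltW; exists M.
Qed.

Lemma sum_expr_le {R : realType} (q : R) m n : 0 < q -> q < 1 ->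
  \sum_(m <= l < n) q ^+ l <= q ^+ m / (1 - q).
Proof.
move=> q0 q1; have [nm|/ltnW mn] := leqP n m.
  by rewrite big_geq // divr_ge0 ?exprn_ge0 ?subr_ge0 ?ltW.
rewrite -(subnKC mn) geometric_partial_tail geometric_le_lim ?exprn_ge0 ?ltW //.
by rewrite ger0_norm ?ltW.
Qed.

Lemma ler_1Bsum_prod1B {R : realType} {I : Type} (s : seq I) (a : I -> R) :
  (forall i, 0 <= a i <= 1) -> 1 - \sum_(i <- s) a i <= \prod_(i <- s) (1 - a i).
Proof.
move=> a01; elim: s => [|i s IH]; first by rewrite !big_nil subr0.
rewrite !big_cons; have /andP [ai0 ai1] := a01 i.
have : 0 <= \sum_(k <- s) a k by apply: sumr_ge0 => k _; case/andP: (a01 k).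
nra.
Qed.

Lemma prod1B_expr_lbound {R : realType} (q : R) : 0 < q -> q < 1 ->
  exists2 c : R, 0 < c & forall W, c <= \prod_(1 <= l < W.+1) (1 - q ^+ l).
Proof.
move=> q0 q1.
have e01 l : 0 <= q ^+ l <= 1 by rewrite exprn_ge0 ?exprn_ile1 ?ltW.
have f01 l : 0 <= 1 - q ^+ l <= 1.
  by case/andP: (e01 l) => e0 e1; rewrite subr_ge0 e1 lerBlDr lerDl.
have [L qL] : exists L : nat, q ^+ L <= (1 - q) / 2.
  by apply: exists_expr_le; rewrite ?ltW //; lra.
pose Q0 := \prod_(1 <= l < L.+1) (1 - q ^+ l).
have Q0_gt0 : 0 < Q0.
  rewrite /Q0 big_nat_cond; apply: prodr_gt0 => l /andP [/andP [l1 _] _].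
  by rewrite subr_gt0 exprn_ilt1 ?(ltW q0) // -lt0n.
exists (Q0 / 2) => [|W]; first by lra.
have prod_ge0 m n : 0 <= \prod_(m <= l < n) (1 - q ^+ l).
  by apply: prodr_ge0 => l _; case/andP: (f01 l).
have prod_le1 m n : \prod_(m <= l < n) (1 - q ^+ l) <= 1.
  by apply: prodr_ile1 => l _; exact: f01.
have split_prod m n p : (m <= n <= p)%N -> \prod_(m <= l < p) (1 - q ^+ l) =
    \prod_(m <= l < n) (1 - q ^+ l) * \prod_(n <= l < p) (1 - q ^+ l).
  by move=> /andP [mn np]; rewrite -big_cat_nat.
have tail : 1 / 2 <= \prod_(L.+1 <= l < L.+1 + W) (1 - q ^+ l).
  apply: le_trans _ (ler_1Bsum_prod1B _ _ e01).
  have q1_gt0 : 0 < 1 - q by rewrite subr_gt0.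
  have qL1 : q ^+ L.+1 <= q ^+ L by rewrite exprS ler_piMl ?exprn_ge0 ?ltW.
  have := sum_expr_le q L.+1 (L.+1 + W) q0 q1; rewrite ler_pdivlMr //.
  set S := \sum_(_ <- _) _; nra.
have := split_prod 1%N L.+1 (L.+1 + W) ltac:(lia); rewrite -/Q0 => eLW.
have := split_prod 1%N W.+1 (L.+1 + W) ltac:(lia) => eWL.
have := prod_le1 W.+1 (L.+1 + W); have := prod_ge0 1%N W.+1.
nra.
Qed.

Lemma negligible_small_covers d (T : measurableType d) (R : realType)
    (mu : {measure set T -> \bar R}) (S : set T) :
  (forall e : R, 0 < e -> exists2 A, measurable A & S `<=` A /\ (mu A <= e%:E)%E) ->
  mu.-negligible S.
Proof.
move=> cover; pose eps n : R := 2^-1 ^+ n.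
have eps_gt0 n : 0 < eps n by rewrite exprn_gt0 ?invr_gt0.
have /boolp.choice [A hA] : forall n, exists B,
    [/\ measurable B, S `<=` B & (mu B <= (eps n)%:E)%E].
  by move=> n; have [B mB [SB muB]] := cover _ (eps_gt0 n); exists B.
have mA : measurable (\bigcap_n A n) by apply: bigcapT_measurable => n; case: (hA n).
exists (\bigcap_n A n); split => //; last by move=> w Sw n _; case: (hA n) => _ /(_ w Sw).
apply/eqP; rewrite eq_le measure_ge0 andbT; apply/lee_addgt0Pr => e e0.
have [n en] : exists n, eps n <= e by apply: exists_expr_le; rewrite ?invr_ge0 ?invf_lt1 ?ltr1n.
have [mAn _ muAn] := hA n; rewrite add0e.
apply: (@le_trans _ _ (mu (A n))).
  by apply: le_measure; rewrite ?inE //; exact: bigcap_inf.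
by apply: le_trans muAn _; rewrite lee_fin.
Qed.

Lemma increasing_enumeration (S : int -> Prop) :
  (forall x, exists2 k, x < k & S k) -> (forall x, exists2 k, k < x & S k) ->
  exists Rs : int -> int, (forall i, Rs i < Rs (i + 1)) /\ (forall i, S (Rs i)).
Proof.
move=> up down.
have /boolp.choice [f hf] : forall x, exists k, x < k /\ S k.
  by move=> x; have [k] := up x; exists k.
have /boolp.choice [g hg] : forall x, exists k, k < x /\ S k.
  by move=> x; have [k] := down x; exists k.
exists (fun i => match i with Posz m => iter m.+1 f 0 | Negz m => iter m.+1 g 0 end).
split => [[m|[|m]]|[m|m]]; last 2 first.
- by case: (hf (iter m f 0)).
- by case: (hg (iter m g 0)).
- by rewrite (_ : Posz m + 1 = Posz m.+1); [case: (hf (iter m.+1 f 0))|lia].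
- by rewrite (_ : Negz 0 + 1 = 0) /=; [case: (hf 0); case: (hg 0); lia|].
- rewrite (_ : Negz m.+1 + 1 = Negz m); last by rewrite !NegzE; lia.
  by case: (hg (iter m.+1 g 0)).
Qed.

Definition idx_site (i : (int * nat) + (int * nat)) : int :=
  match i with inl (x, _) => x | inr (x, _) => x end.

(* The coordinates fixed by the event that [k] is separating as far as jumps of
   length at most [W] are concerned: chi_t(k+t) = 0 and j_t(k+t-l) <= l for
   1 <= l <= W, the constraint on each coordinate being given by [window_sets k]. *)
Definition window (N : nat) (k : int) (W : nat) : seq ((int * nat) + (int * nat)) :=
  [seq inl (k + t%:Z, t) | t <- index_iota 1 N.+1] ++
  [seq inr (k + p.1%:Z - p.2%:Z, p.1)
     | p <- [seq (t, l) | t <- index_iota 1 N.+1, l <- index_iota 1 W.+1]].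

Definition window_sets (k : int) (i : (int * nat) + (int * nat)) : set nat :=
  if i is inr (m, t) then [set r | r%:Z + m <= k + t%:Z] else [set 0%N].

Lemma window_uniq N k W : uniq (window N k W).
Proof.
rewrite cat_uniq; apply/and3P; split.
- by rewrite map_inj_uniq ?iota_uniq // => t t' [].
- by apply/hasPn => _ /mapP [p _ ->]; apply/mapP => -[t _].
rewrite map_inj_uniq ?allpairs_uniq ?iota_uniq //; first by move=> [? ?] [? ?].
by move=> [t l] [t' l'] /= [e e']; subst t'; congr pair; lia.
Qed.

Lemma mem_window N k W i : i \in window N k W ->
  (1 <= idx_time i <= N)%N /\ k + (idx_time i)%:Z - W%:Z <= idx_site i <= k + (idx_time i)%:Z.
Proof.
rewrite mem_cat => /orP [/mapP [t] | /mapP [[t l] /allpairsP [[t' l'] /= [t'N l'W [-> ->]]]]] /=.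
  by rewrite mem_index_iota => tN -> /=; split; lia.
by move=> -> /=; move: t'N l'W; rewrite !mem_index_iota; split; lia.
Qed.

Lemma window_disjoint N W k k' : W%:Z < `|k - k'| ->
  ~~ has (mem (window N k W)) (window N k' W).
Proof.
move=> kk'; apply/hasPn => i /mem_window [_ i']; apply/negP => /mem_window [_ i1].
case: i i' i1 => [[x t]|[x t]] /=; lia.
Qed.

Lemma uniq_flatten_windows N W (kp : nat -> int) (ks : seq nat) : uniq ks ->
  (forall i i', i != i' -> W%:Z < `|kp i - kp i'|) ->
  uniq (flatten [seq window N (kp i) W | i <- ks]).
Proof.
move=> uks far_kp; elim: ks uks => [|k ks IH] //= /andP [kks uks].
rewrite cat_uniq window_uniq IH // andbT; apply/hasPn => i /flatten_mapP [k' k'ks iw].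
have kk' : k != k' by apply: contraNneq kks => ->.
by have /hasPn := window_disjoint N W _ _ (far_kp _ _ kk'); apply.
Qed.

Definition rectangle {T I : Type} (X : I -> T -> nat) (s : seq I) (A : I -> set nat) :
  set T := \big[setI/setT]_(i <- s) X i @^-1` A i.

Lemma in_rectangle {T : Type} {I : choiceType} (X : I -> T -> nat) s A w :
  rectangle X s A w <-> forall i, i \in s -> A i (X i w).
Proof. by rewrite /rectangle -bigcap_seq. Qed.

Section probability.
Context d (T : measurableType d) (R : realType) (P : probability T R).

Let pr (A : set T) : R := fine (P A).

Let prE A : measurable A -> P A = (pr A)%:E.
Proof. by move=> mA; rewrite fineK ?fin_num_measure. Qed.

Let prD A B : measurable A -> measurable B -> pr (A `\` B) = pr A - pr (A `&` B).
Proof.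
move=> mA mB; have mD := measurableD mA mB; have mI := measurableI _ _ mA mB.
apply: EFin_inj; rewrite EFinB -!prE //.
by rewrite (measureDI P mA mB) addeK // fin_num_measure.
Qed.

Let pr_le1 A : measurable A -> pr A <= 1.
Proof. by move=> mA; rewrite -lee_fin -prE // probability_le1. Qed.

Let prC A : measurable A -> pr (~` A) = 1 - pr A.
Proof.
move=> mA; apply: EFin_inj; rewrite EFinB -!prE ?probability_setC //.
exact: measurableC.
Qed.

Section independent_rectangles.
Context {I : choiceType} {J : set I} {X : I -> T -> nat}.
Hypothesis indep : mutually_independent P J X.

Lemma measurable_rectangle s A : [set` s] `<=` J -> measurable (rectangle X s A).
Proof.
move=> sJ; rewrite /rectangle big_seq.
by apply: bigsetI_measurable => i /sJ Ji; exact: indep.1.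
Qed.

Lemma pr_rectangle s A : uniq s -> [set` s] `<=` J ->
  pr (rectangle X s A) = \prod_(i <- s) pr (X i @^-1` A i).
Proof.
move=> us sJ; apply: EFin_inj; rewrite -prE; last exact: measurable_rectangle.
rewrite /rectangle -bigcap_seq indep.2 // -prodEFin.
by apply: eq_big_seq => i /sJ Ji; rewrite -prE //; exact: indep.1.
Qed.

Lemma setI_rectangle s1 s2 A1 A2 : ~~ has (mem s1) s2 ->
  rectangle X s1 A1 `&` rectangle X s2 A2 =
  rectangle X (s1 ++ s2) (fun i => if i \in s1 then A1 i else A2 i).
Proof.
move=> /hasPn s12; rewrite /rectangle big_cat /=; congr (_ `&` _).
  by apply: eq_big_seq => i /= ->.
by apply: eq_big_seq => i /s12 /negbTE /= ->.
Qed.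

Lemma pr_setI_rectangle s1 s2 A1 A2 : uniq (s1 ++ s2) -> [set` s1 ++ s2] `<=` J ->
  pr (rectangle X s1 A1 `&` rectangle X s2 A2) =
  pr (rectangle X s1 A1) * pr (rectangle X s2 A2).
Proof.
move=> u sJ; have := u; rewrite cat_uniq => /and3P [u1 s12 u2].
have s1J : [set` s1] `<=` J by move=> i s1i; apply: sJ; rewrite /= mem_cat s1i.
have s2J : [set` s2] `<=` J by move=> i s2i; apply: sJ; rewrite /= mem_cat s2i orbT.
rewrite setI_rectangle // !pr_rectangle // big_cat /=; congr (_ * _).
  by apply: eq_big_seq => i /= ->.
by apply: eq_big_seq => i s2i /=; move/hasPn: s12 => /(_ i s2i) /negbTE ->.
Qed.

(* The prefix rectangle [s] is what makes the induction on [ks] go through. *)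
Lemma pr_rectangle_setI_coRectangles s A (F : nat -> seq I) (B : nat -> I -> set nat) ks :
  uniq (s ++ flatten (map F ks)) -> [set` s ++ flatten (map F ks)] `<=` J ->
  pr (rectangle X s A `&` \big[setI/setT]_(k <- ks) ~` rectangle X (F k) (B k)) =
  pr (rectangle X s A) * \prod_(k <- ks) (1 - pr (rectangle X (F k) (B k))).
Proof.
elim: ks s A => [|k ks IH] s A u sJ; first by rewrite !big_nil setIT mulr1.
rewrite !big_cons; set C := \big[setI/setT]_(_ <- ks) _.
move: u sJ; rewrite /=; set G := flatten (map F ks) => u sJ.
have mR t D : {subset t <= s ++ F k ++ G} -> measurable (rectangle X t D).
  by move=> st; apply: measurable_rectangle => i /st; exact: sJ.
have sub_s : {subset s <= s ++ F k ++ G} by move=> i si; rewrite mem_cat si.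
have sub_F : {subset F k <= s ++ F k ++ G} by move=> i Fi; rewrite !mem_cat Fi orbT.
have sub_G : {subset G <= s ++ F k ++ G} by move=> i Gi; rewrite !mem_cat Gi !orbT.
have mC : measurable C.
  rewrite /C big_seq; apply: bigsetI_measurable => k' k'ks.
  by apply/measurableC/mR => i Fi; apply: sub_G; apply/flatten_mapP; exists k'.
have mS := mR s A sub_s; have mE := mR (F k) (B k) sub_F.
have mSC := measurableI _ _ mS mC.
have -> : rectangle X s A `&` (~` rectangle X (F k) (B k) `&` C) =
    (rectangle X s A `&` C) `\` rectangle X (F k) (B k).
  by apply/seteqP; split => w /=; tauto.
have u_sF : uniq (s ++ F k) by move: u; rewrite catA cat_uniq => /andP [].
have u_sG : uniq (s ++ G) by move: u; rewrite uniq_catCA cat_uniq => /and3P [].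
have := u_sF; rewrite cat_uniq => /and3P [_ dis_sF _].
have u_sFG : uniq ((s ++ F k) ++ G) by rewrite -catA.
have sFG_J : [set` (s ++ F k) ++ G] `<=` J by move=> i; rewrite /= -catA; exact: sJ.
have sG_J : [set` s ++ G] `<=` J.
  by move=> i /=; rewrite mem_cat => /orP [/sub_s|/sub_G]; exact: sJ.
have sF_J : [set` s ++ F k] `<=` J.
  by move=> i /=; rewrite mem_cat => /orP [/sub_s|/sub_F]; exact: sJ.
rewrite prD // setIAC setI_rectangle // (IH _ _ u_sFG sFG_J) -setI_rectangle //.
rewrite pr_setI_rectangle // /C (IH _ _ u_sG sG_J).
ring.
Qed.

End independent_rectangles.

Lemma geometric_tail (Y : T -> nat) (q : R) :
  (forall A, measurable (Y @^-1` A)) -> 0 <= q ->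
  (forall r, (0 < r)%N -> P [set w | Y w = r] = ((1 - q) * q ^+ r.-1)%:E) ->
  forall l, (P [set w | (l < Y w)%N] <= (q ^+ l)%:E)%E.
Proof.
move=> mY q0 law l.
have m_le n : measurable [set w | (Y w <= n)%N] := mY [set r | (r <= n)%N].
have m_eq r : measurable [set w | Y w = r] := mY [set r].
have cdf_ge n : 1 - q ^+ n <= pr [set w | (Y w <= n)%N].
  elim: n => [|n IH]; first by rewrite expr0 subrr fine_ge0 ?measure_ge0.
  have -> : [set w | (Y w <= n.+1)%N] = [set w | (Y w <= n)%N] `|` [set w | Y w = n.+1].
    apply/seteqP; split => w /=; last by case=> [/leqW|->].
    by rewrite leq_eqVlt ltnS => /orP [/eqP|]; [right|left].
  have disj : [set w | (Y w <= n)%N] `&` [set w | Y w = n.+1] = set0.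
    by apply/seteqP; split => w // [/= + eq_l]; rewrite eq_l ltnn.
  have -> : pr ([set w | (Y w <= n)%N] `|` [set w | Y w = n.+1]) =
      pr [set w | (Y w <= n)%N] + (1 - q) * q ^+ n.
    have mU := measurableU _ _ (m_le n) (m_eq n.+1).
    by apply: EFin_inj; rewrite EFinD -!prE // (measureU P (m_le n) (m_eq n.+1) disj) -(law n.+1).
  by move: IH; rewrite exprS; nra.
have -> : [set w | (l < Y w)%N] = ~` [set w | (Y w <= l)%N].
  by apply/seteqP; split => w /=; rewrite ltnNge => /negP.
rewrite probability_setC // prE // lee_fin.
by move: (cdf_ge l); lra.
Qed.

Section separating_points.
Variables (N : nat) (chi j : nat -> int -> T -> nat) (b1 b2 : R).
Let J := [set i | (1 <= idx_time i <= N)%N].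
Let X := joint_family chi j.
Hypothesis indep : mutually_independent P J X.
Hypotheses (b1_lt1 : b1 < 1) (b2_gt0 : 0 < b2) (b2_lt1 : b2 < 1).
Hypothesis chi_law : forall x t, (1 <= t <= N)%N ->
  P [set w | chi t x w = 0%N] = (1 - b1)%:E.
Hypothesis j_tail : forall x t l, (1 <= t <= N)%N ->
  (P [set w | (l < j t x w)%N] <= (b2 ^+ l)%:E)%E.

Let measurable_j t x A : (1 <= t <= N)%N -> measurable [set w | A (j t x w)].
Proof. by move=> tN; exact: (indep.1 (inr (x, t))). Qed.

Definition far_jump (k : int) (W t : nat) : set T :=
  \bigcup_(m in ~` `I_W.+1) [set w | (m < j t (k + t%:Z - m%:Z) w)%N].

Definition far_jumps (k : int) (W : nat) : set T :=
  \big[setU/set0]_(t < N) far_jump k W t.+1.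

Definition window_event (k : int) (W : nat) : set T :=
  rectangle X (window N k W) (window_sets k).

Let measurable_far_jump_at k t m : (1 <= t <= N)%N ->
  measurable [set w | (m < j t (k + t%:Z - m%:Z) w)%N].
Proof. exact: (measurable_j _ _ [set r | (m < r)%N]). Qed.

Let measurable_far_jump k W t : (1 <= t <= N)%N -> measurable (far_jump k W t).
Proof. by move=> tN; apply: bigcup_measurable => m _; exact: measurable_far_jump_at. Qed.

Let measurable_far_jumps k W : measurable (far_jumps k W).
Proof. by apply: bigsetU_measurable => t _; apply: measurable_far_jump; rewrite ltn_ord. Qed.

Let measurable_window_event k W : measurable (window_event k W).
Proof. by apply: (measurable_rectangle indep) => i /mem_window []. Qed.

Lemma pr_far_jump_le k W t : (1 <= t <= N)%N ->
  (P (far_jump k W t) <= (b2 ^+ W.+1 / (1 - b2))%:E)%E.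
Proof.
move=> tN; pose F m := [set w | (m < j t (k + t%:Z - m%:Z) w)%N].
have mF m : measurable (F m) by exact: measurable_far_jump_at.
have sub : far_jump k W t `<=` \bigcup_(m in ~` `I_W.+1) F m by [].
apply: le_trans (measure_sigma_subadditive_tail P mF (measurable_far_jump k W t tN) sub) _.
apply: le_trans (lee_nneseries (v := fun m => (b2 ^+ m)%:E) _ _) _ => //.
  by move=> m _; exact: j_tail.
apply: lime_le; first by apply: is_cvg_nneseries => m _ _; rewrite lee_fin exprn_ge0 ?ltW.
by apply: nearW => n; rewrite sumEFin lee_fin sum_expr_le.
Qed.

Lemma pr_far_jumps_le k W : (P (far_jumps k W) <= (N%:R * (b2 ^+ W.+1 / (1 - b2)))%:E)%E.
Proof.
have mF t : (t < N)%N -> measurable (far_jump k W t.+1).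
  by move=> tN; apply: measurable_far_jump; rewrite tN.
apply: le_trans (Boole_inequality P mF) _.
rewrite (_ : (N%:R * _)%:E = \sum_(t < N) (b2 ^+ W.+1 / (1 - b2))%:E).
  by apply: lee_sum => t _; apply: pr_far_jump_le; rewrite ltn_ord.
by rewrite sumEFin sumr_const card_ord mulr_natl.
Qed.

Lemma separating_of_window k W w :
  window_event k W w -> ~ far_jumps k W w -> separating N chi j w k.
Proof.
move=> /in_rectangle inE no_far t tN.
have t_in : t \in index_iota 1 N.+1 by rewrite mem_index_iota; lia.
split; first by have := inE (inl (k + t%:Z, t)); rewrite mem_cat map_f //; apply.
move=> m mkt; have [m_near|m_far] := lerP (k + t%:Z - W%:Z) m.
  pose l := absz (k + t%:Z - m)%R.
  have l_in : l \in index_iota 1 W.+1 by rewrite mem_index_iota; lia.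
  have := inE (inr (k + t%:Z - l%:Z, t)); rewrite mem_cat.
  rewrite (map_f (fun p => inr (k + p.1%:Z - p.2%:Z, p.1)) (allpairs_f pair t_in l_in)) orbT.
  by rewrite /= (_ : k + t%:Z - l%:Z = m); [apply|lia].
pose l := absz (k + t%:Z - m)%R.
have no_jump : ~ (l < j t (k + t%:Z - l%:Z) w)%N.
  move=> jump; apply: no_far.
  rewrite /far_jumps -(bigcup_mkord N (fun t => far_jump k W t.+1)).
  exists t.-1; first by rewrite /= mem_index_iota in t_in *; lia.
  by rewrite prednK; [exists l => //=; rewrite /l; lia | lia].
have -> : m = k + t%:Z - l%:Z by lia.
by move/negP: no_jump; rewrite -leqNgt; lia.
Qed.

Let pr_j_le x t l : (1 <= t <= N)%N -> 1 - b2 ^+ l <= pr [set w | (j t x w <= l)%N].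
Proof.
move=> tN; have m_gt := measurable_j t x [set r | (l < r)%N] tN.
have tail : pr [set w | (l < j t x w)%N] <= b2 ^+ l by rewrite -lee_fin -prE // j_tail.
have -> : [set w | (j t x w <= l)%N] = ~` [set w | (l < j t x w)%N].
  by apply/seteqP; split => w /=; lia.
by rewrite prC //; lra.
Qed.

Lemma pr_window_event_ge k W :
  ((1 - b1) * \prod_(1 <= l < W.+1) (1 - b2 ^+ l)) ^+ N <= pr (window_event k W).
Proof.
have b1_le1 : 0 <= 1 - b1 by rewrite subr_ge0 ltW.
have f01 l : 0 <= 1 - b2 ^+ l by rewrite subr_ge0 exprn_ile1 ?ltW.
rewrite /window_event (pr_rectangle indep) ?window_uniq //; last by move=> i /mem_window [].
rewrite big_cat /= !big_map big_allpairs exprMn.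
have cst x : \prod_(1 <= t < N.+1) x = x ^+ N by rewrite prodr_const_nat subn1.
rewrite -!cst; apply: ler_pM.
- exact: prodr_ge0.
- by apply: prodr_ge0 => t _; exact: prodr_ge0.
- rewrite big_seq [X in _ <= X]big_seq; apply: ler_prod => t.
  rewrite mem_index_iota => tN; apply/andP; split => //.
  by rewrite /pr (_ : _ @^-1` _ = [set w | chi t (k + t%:Z) w = 0%N]) // chi_law.
rewrite big_seq [X in _ <= X]big_seq; apply: ler_prod => t.
rewrite mem_index_iota => tN; rewrite prodr_ge0 //=.
rewrite big_seq [X in _ <= X]big_seq; apply: ler_prod => l _; rewrite f01 /=.
rewrite (_ : _ @^-1` _ = [set w | (j t (k + t%:Z - l%:Z) w <= l)%N]).
  exact: pr_j_le.
by apply/seteqP; split => w /=; lia.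
Qed.

Lemma pr_no_window_event_le (kp : nat -> int) W K a :
  (forall i i', i != i' -> W%:Z < `|kp i - kp i'|) ->
  (forall k, a <= pr (window_event k W)) ->
  pr (\big[setI/setT]_(0 <= i < K) ~` window_event (kp i) W) <= (1 - a) ^+ K.
Proof.
move=> far_kp a_le.
have := pr_rectangle_setI_coRectangles indep [::] (fun=> setT) (fun i => window N (kp i) W)
  (fun i => window_sets (kp i)) (index_iota 0 K).
rewrite /= {1}/rectangle big_nil setTI => ->; first last.
- by move=> i /flatten_mapP [k _ /mem_window []].
- by apply: uniq_flatten_windows => //; exact: iota_uniq.
rewrite (_ : pr (rectangle X [::] _) = 1) ?mul1r; last first.
  by rewrite /pr /rectangle big_nil probability_setT.
have -> : (1 - a) ^+ K = \prod_(0 <= i < K) (1 - a) by rewrite prodr_const_nat subn0.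
apply: ler_prod => i _; rewrite lerB ?a_le // subr_ge0.
by rewrite andbT pr_le1 //; exact: measurable_window_event.
Qed.

Lemma no_separating_cover (kp : nat -> int) W K a :
  (forall i i', i != i' -> W%:Z < `|kp i - kp i'|) ->
  (forall k, a <= pr (window_event k W)) ->
  exists2 A, measurable A &
    [set w | forall i, (i < K)%N -> ~ separating N chi j w (kp i)] `<=` A /\
    (P A <= ((1 - a) ^+ K + K%:R * (N%:R * (b2 ^+ W.+1 / (1 - b2))))%:E)%E.
Proof.
move=> far_kp a_le.
pose E := \big[setI/setT]_(0 <= i < K) ~` window_event (kp i) W.
pose F := \big[setU/set0]_(i < K) far_jumps (kp i) W.
have mE : measurable E.
  by apply: bigsetI_measurable => i _; exact/measurableC/measurable_window_event.
have mF : measurable F by apply: bigsetU_measurable => i _; exact: measurable_far_jumps.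
exists (E `|` F); first exact: measurableU.
split.
  move=> w no_sep; have [|no_far] := pselect (F w); [by right | left].
  rewrite /E -bigcap_seq => i /=; rewrite mem_index_iota => iK window_i.
  apply: (no_sep i iK); apply: separating_of_window window_i _ => far_i.
  by apply: no_far; rewrite /F -(bigcup_mkord K (fun i => far_jumps (kp i) W)); exists i.
apply: le_trans (measureU2 P mE mF) _; rewrite EFinD leeD //.
  by move: (pr_no_window_event_le _ _ K _ far_kp a_le); rewrite -lee_fin -prE.
apply: le_trans (Boole_inequality P (fun i _ => measurable_far_jumps (kp i) W)) _.
rewrite (_ : (K%:R * _)%:E = \sum_(i < K) (N%:R * (b2 ^+ W.+1 / (1 - b2)))%:E).
  by apply: lee_sum => i _; exact: pr_far_jumps_le.
by rewrite sumEFin sumr_const card_ord mulr_natl.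
Qed.

Lemma negligible_no_separating (D : set int) :
  (forall W, exists2 kp : nat -> int, (forall i, D (kp i)) &
     (forall i i', i != i' -> W%:Z < `|kp i - kp i'|)) ->
  P.-negligible [set w | forall k, D k -> ~ separating N chi j w k].
Proof.
move=> spread; apply: negligible_small_covers => e e_gt0.
have b1_ge0 : 0 <= 1 - b1 by rewrite subr_ge0 ltW.
have [c c_gt0 c_le] := prod1B_expr_lbound b2 b2_gt0 b2_lt1.
pose a := ((1 - b1) * c) ^+ N.
have a_le W k : a <= pr (window_event k W).
  apply: le_trans (pr_window_event_ge k W); apply: lerXn2r; rewrite ?nnegrE.
  - by rewrite mulr_ge0 // ltW.
  - by rewrite mulr_ge0 // (le_trans (ltW c_gt0) (c_le W)).
  - by rewrite ler_wpM2l.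
have a_gt0 : 0 < a by rewrite exprn_gt0 // mulr_gt0 // subr_gt0.
have a_le1 : a <= 1 by apply: le_trans (a_le 0%N 0) _; exact/pr_le1/measurable_window_event.
have [K aK] : exists K, (1 - a) ^+ K <= e / 2 by apply: exists_expr_le; lra.
pose KN := K%:R * N%:R : R.
have KN_ge0 : 0 <= KN by rewrite mulr_ge0.
have [W b2W] : exists W, b2 ^+ W <= e / 2 * (1 - b2) / (KN + 1).
  by apply: exists_expr_le; rewrite ?ltW // divr_gt0 ?mulr_gt0 ?subr_gt0 //; lra.
have [kp D_kp far_kp] := spread W.
have [A mA [cover PA]] := no_separating_cover _ _ K _ far_kp (a_le W).
exists A => //; split; first by move=> w no_sep; apply: cover => i _; exact: no_sep.
apply: le_trans PA _; rewrite lee_fin mulrA -/KN.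
set x := b2 ^+ W.+1 / (1 - b2).
have x_ge0 : 0 <= x by rewrite divr_ge0 ?exprn_ge0 ?subr_ge0 ?ltW.
have x_le : x * (KN + 1) <= e / 2.
  rewrite mulrAC ler_pdivrMr ?subr_gt0 //.
  move: b2W; rewrite ler_pdivlMr ?ltr_wpDl //.
  have : b2 ^+ W.+1 <= b2 ^+ W by rewrite exprS ler_piMl ?exprn_ge0 ?ltW.
  nra.
nra.
Qed.

Lemma ae_separating_sequence : {ae P, forall w, exists Rs : int -> int,
  (forall i, Rs i < Rs (i + 1)) /\ (forall i, separating N chi j w (Rs i))}.
Proof.
have above n : P.-negligible [set w | forall k, n <= k -> ~ separating N chi j w k].
  apply: negligible_no_separating => W; exists (fun i => n + (i * W.+1)%:Z) => /=.
    by move=> i; lia.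
  by move=> i i' ii'; nia.
have below n : P.-negligible [set w | forall k, k <= n -> ~ separating N chi j w k].
  apply: negligible_no_separating => W; exists (fun i => n - (i * W.+1)%:Z) => /=.
    by move=> i; lia.
  by move=> i i' ii'; nia.
have := negligible_bigcup (fun n : nat => negligibleU (above n%:Z) (below (- n%:Z))).
apply: negligibleS => w /= no_seq; apply: contrapT => not_in; apply: no_seq.
apply: increasing_enumeration => x; apply: contrapT => none; apply: not_in.
  by exists (absz x).+1 => //; left => k xk sep; apply: none; exists k => //; lia.
by exists (absz x).+1 => //; right => k xk sep; apply: none; exists k => //; lia.
Qed.

End separating_points.
End probability.

Theorem lemma2p3 (d : measure_display) (T : measurableType d) (R : realType)
  (P : probability T R) (b1 b2 : R) (N : nat) (chi j : nat -> int -> T -> nat) :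
  0 < b1 -> b1 < b2 -> b2 < 1 -> (1 <= N)%N ->
  mutually_independent P [set i | (1 <= idx_time i <= N)%N] (joint_family chi j) ->
  (forall (x : int) (t : nat), (1 <= t <= N)%N ->
     P [set w | chi t x w = 1%N] = b1%:E /\ P [set w | chi t x w = 0%N] = (1 - b1)%:E) ->
  (forall (x : int) (t r : nat), (1 <= t <= N)%N -> (1 <= r)%N ->
     P [set w | j t x w = r] = ((1 - b2) * b2 ^+ r.-1)%:E) ->
  {ae P, forall w, exists Rs : int -> int,
     (forall i : int, Rs i < Rs (i + 1)) /\ (forall i : int, separating N chi j w (Rs i))}.
Proof.
move=> b1_gt0 b12 b2_lt1 _ indep chi_law j_law.
have b2_gt0 := lt_trans b1_gt0 b12.
apply: (ae_separating_sequence _ _ _ P N chi j b1 b2 indep (lt_trans b12 b2_lt1) b2_gt0 b2_lt1).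
  by move=> x t tN; case: (chi_law x t tN).
move=> x t l tN; apply: geometric_tail (ltW b2_gt0) _ l.
  exact: (indep.1 (inr (x, t))).
by move=> r; exact: j_law.
Qed.
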